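(* Every sequential transduction belongs to $\mathsf{Lex}_1$.
   Context: A sequential transducer over alphabets $\Sigma,\Gamma$ is a deterministic finite automaton $A=(Q,q_0,F,\delta)$ over $\Sigma$ together with an output function $\mu:\mathrm{dom}(\delta)\to\Gamma^*$. The transduction it computes is defined exactly on $L(A)$, mapping $u$ to the concatenation of the outputs $\mu(q,\sigma)$ along the run of $A$ on $u$. A sequential transduction is one computed by a sequential transducer. Alphabets are finite. For words $u,v$ of equal length over alphabets $\Sigma_1,\Sigma_2$, $u\otimes v$ is the word over $\Sigma_1\times\Sigma_2$ with $(u\otimes v)[i]=(u[i],v[i])$. A transduction is a partial function $f:\Sigma^*\rightharpoonup\Gamma^*$. A simple transduction is a transduction $f=\sum_{i=1}^n L_i\triangleright w_i$, where $L_1,\dots,L_n\subseteq\Sigma^*$ are pairwise disjoint regular languages and each $w_i\in\Gamma^{\le 1}$ is a word of length at most 1. It satisfies $f(u)=w_i$ if $u\in L_i$, and $f(u)$ is undefined if $u\notin\bigcup_iL_i$. An ordered alphabet is a pair $\lambda=(B,\prec)$ with $B$ a finite set and $\prec$ a strict linear order on $B$. The order is extended to $B^n$ for each $n$ by: $u\prec v$ iff there is $i\le n$ with $u[i]\prec v[i]$ and $u[j]=v[j]$ for all $i<j\le n$ (most significant letter on the right). For a transduction $f:(\Sigma\times B)^*\rightharpoonup\Gamma^*$, the transduction $\mathsf{maplex}_\lambda f:\Sigma^*\rightharpoonup\Gamma^*$ maps $u$ to $f(u\otimes b_1)f(u\otimes b_2)\cdots f(u\otimes b_m)$, where $b_1\prec\cdots\prec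 b_m$ is the increasing enumeration of all of $B^{|u|}$. It is defined on $u$ iff every $f(u\otimes b_j)$ is defined. $\mathsf{Lex}_1$ is the class of transductions $\mathsf{maplex}_\lambda f$ with $\lambda=(B,\prec)$ an ordered alphabet and $f:(\Sigma\times B)^*\rightharpoonup\Gamma^*$ a simple transduction. *)

From mathcomp Require Import all_boot.
Set Implicit Arguments. Unset Strict Implicit. Unset Printing Implicit Defensive.

Definition transduction (Sigma Gamma : Type) := seq Sigma -> option (seq Gamma).

Fixpoint dfa_accepts (Sigma Q : Type) (F : pred Q) (delta : Q -> Sigma -> option Q)
    (q : Q) (u : seq Sigma) : bool :=
  match u with
  | [::] => F q
  | a :: u' => match delta q a with
               | Some q' => dfa_accepts F delta q' u'
               | None => false
               end
  end.

Definition regular (Sigma : Type) (L : pred (seq Sigma)) : Prop :=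
  exists (Q : finType) (q0 : Q) (F : pred Q) (delta : Q -> Sigma -> option Q),
    forall u, L u = dfa_accepts F delta q0 u.

Fixpoint seq_run (Sigma Gamma Q : Type) (F : pred Q) (delta : Q -> Sigma -> option Q)
    (mu : Q -> Sigma -> seq Gamma) (q : Q) (u : seq Sigma) : option (seq Gamma) :=
  match u with
  | [::] => if F q then Some [::] else None
  | a :: u' => match delta q a with
               | Some q' => omap (fun w => mu q a ++ w) (seq_run F delta mu q' u')
               | None => None
               end
  end.

(* mu is only meaningful on dom(delta); its values elsewhere are never used. *)
Definition sequential (Sigma Gamma : Type) (g : transduction Sigma Gamma) : Prop :=
  exists (Q : finType) (q0 : Q) (F : pred Q) (delta : Q -> Sigma -> option Q)
         (mu : Q -> Sigma -> seq Gamma),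
    forall u, g u = seq_run F delta mu q0 u.

Definition simple_transduction (Sigma Gamma : Type) (f : transduction Sigma Gamma) : Prop :=
  exists (n : nat) (L : 'I_n -> pred (seq Sigma)) (w : 'I_n -> seq Gamma),
    [/\ forall i, regular (L i),
        forall i, size (w i) <= 1,
        forall i j u, i != j -> L i u -> L j u -> False,
        forall i u, L i u -> f u = Some (w i)
      & forall u, (forall i, ~~ L i u) -> f u = None].

Definition strict_linear_order (B : eqType) (lt : rel B) : Prop :=
  [/\ irreflexive lt, transitive lt & forall x y, x != y -> lt x y || lt y x].

(* Extension to B^n: most significant letter on the right. *)
Definition lex_lt (B : eqType) (lt : rel B) (n : nat) (u v : n.-tuple B) : bool :=
  [exists i : 'I_n, lt (tnth u i) (tnth v i) &&
     [forall j : 'I_n, (i < j) ==> (tnth u j == tnth v j)]].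

Definition lex_enum (B : finType) (lt : rel B) (n : nat) : seq (n.-tuple B) :=
  sort (fun a b => (a == b) || lex_lt lt a b) (enum [set: n.-tuple B]).

(* u (x) b, used only for b of length |u|. *)
Definition tensor (Sigma B : Type) (u : seq Sigma) (b : seq B) : seq (Sigma * B) :=
  zip u b.

Definition maplex (Sigma Gamma : Type) (B : finType) (lt : rel B)
    (f : transduction (Sigma * B) Gamma) : transduction Sigma Gamma :=
  fun u =>
    foldr (fun (b : (size u).-tuple B) acc => obind (fun w => omap (fun r => w ++ r) acc) (f (tensor u (tval b))))
          (Some [::]) (lex_enum lt (size u)).

Definition Lex1 (Sigma Gamma : Type) (g : transduction Sigma Gamma) : Prop :=
  exists (B : finType) (lt : rel B) (f : transduction (Sigma * B) Gamma),
    [/\ strict_linear_order lt, simple_transduction f & forall u, g u = maplex lt f u].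

From mathcomp Require Import all_boot.
Set Implicit Arguments. Unset Strict Implicit. Unset Printing Implicit Defensive.

(* Let K bound the length of every transition output and take B = {0, ..., K+1}.
   The word (K+1)^i (j+1) 0^(n-i-1) of B^n points at the j-th letter written by
   the transducer while reading position i. Since the most significant letter is
   the rightmost one, these pointers come in lexicographic order exactly by
   position and then by j, i.e. in the order the output is written. So maplex
   reproduces the output of the transducer when f, on u (x) b, emits the letter
   b points at (nothing if b is not a pointer or points past the end of that
   output) and is undefined iff u is rejected; such an f is computed by a DFA
   running the transducer next to a small automaton that checks the pointer. *)

Lemma pairwise_allpairs (S T R : eqType) (f : S -> T -> R)
    (rS : rel S) (rT : rel T) (r : rel R) s t :
    (forall x x' y y', rS x x' -> r (f x y) (f x' y')) ->
    (forall x y y', rT y y' -> r (f x y) (f x y')) ->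
  pairwise rS s -> pairwise rT t -> pairwise r [seq f x y | x <- s, y <- t].
Proof.
move=> rS_r rT_r + pairwise_t; elim: s => //= x s IH /andP[x_s pairwise_s].
rewrite pairwise_cat IH // andbT pairwise_map (sub_pairwise _ pairwise_t) ?andbT.
  apply/allrelP => _ _ /mapP[y _ ->] /allpairsP[[x' y'] [/= x's _ ->]].
  exact/rS_r/(allP x_s).
by move=> y y'; apply: rT_r.
Qed.

Lemma flatten_allpairs (S T R : Type) (f : S -> T -> seq R) s t :
  flatten [seq f x y | x <- s, y <- t] = flatten [seq flatten [seq f x y | y <- t] | x <- s].
Proof. by elim: s => //= x s IH; rewrite flatten_cat IH. Qed.

Lemma flatten_onth (T : Type) (s : seq T) k :
  size s <= k -> flatten [seq seq_of_opt (onth s j) | j <- iota 0 k] = s.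
Proof.
elim: s k => [|x s IH] k le_sk.
  by elim: (iota 0 k) => //= j js ->; rewrite onth0n.
by case: k le_sk => // k le_sk; rewrite /= (iotaDl 1 0) -map_comp -[in RHS](IH k).
Qed.

Section LexOrder.

Variables (B : finType) (lt : rel B).
Hypothesis lt_slo : strict_linear_order lt.
Variable n : nat.

Local Notation lex := (@lex_lt B lt n).

Lemma lex_lt_irr : irreflexive lex.
Proof.
have [lt_irr _ _] := lt_slo.
by move=> a; apply/existsP => -[i /andP[]]; rewrite lt_irr.
Qed.

Lemma lex_lt_trans : transitive lex.
Proof.
have [_ lt_trans _] := lt_slo.
move=> b a c /existsP[i /andP[lt_ab /forallP eq_ab]].
move=> /existsP[i' /andP[lt_bc /forallP eq_bc]].
have eq_above (k : 'I_n) : i < k -> i' < k -> tnth a k = tnth c k.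
  by move=> ik i'k; move: (eq_ab k) (eq_bc k); rewrite ik i'k => /eqP-> /eqP.
apply/existsP; exists (if i < i' then i' else i); apply/andP; split.
- case: (ltngtP i i') => [ii'|i'i|/val_inj eqi]; last by subst i'; apply: lt_trans lt_bc.
  + by move: (eq_ab i'); rewrite ii' => /eqP->.
  + by move: (eq_bc i); rewrite i'i => /eqP<-.
- apply/forallP => k; apply/implyP.
  case: (ltngtP i i') => [ii'|i'i|/val_inj eqi] lt_k; last subst i';
    apply/eqP/eq_above => //; exact: ltn_trans lt_k.
Qed.

Lemma lex_lt_total a b : a != b -> lex a b || lex b a.
Proof.
have [_ _ lt_total] := lt_slo.
move=> neq_ab; have [i0 diff_i0] : exists i, tnth a i != tnth b i.
  apply/existsP; apply: contraR neq_ab => /existsPn same.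
  by apply/eqP/eq_from_tnth => i; apply/eqP; rewrite -[_ == _]negbK same.
case: (@arg_maxnP _ i0 (fun i => tnth a i != tnth b i) val diff_i0) => i diff_i max_i.
have eq_above (k : 'I_n) : (i < k) ==> (tnth a k == tnth b k).
  by apply/implyP; apply: contraTT => /max_i; rewrite -leqNgt.
have eq_above' (k : 'I_n) : (i < k) ==> (tnth b k == tnth a k).
  by rewrite eq_sym eq_above.
case/orP: (lt_total _ _ diff_i) => lt_i; apply/orP; [left|right];
  by apply/existsP; exists i; rewrite lt_i; apply/forallP.
Qed.

Lemma lex_enum_sorted : sorted lex (lex_enum lt n).
Proof.
have le_total : total (fun a b => (a == b) || lex a b).
  by move=> a b; case: eqVneq => // /lex_lt_total.
have := sort_uniq (fun a b => (a == b) || lex a b) (enum [set: n.-tuple B]).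
rewrite enum_uniq; move: (sort_sorted le_total (enum [set: n.-tuple B])).
rewrite -/(lex_enum lt n); elim: (lex_enum lt n) => // a [|b s] IH //=.
move=> /andP[le_ab path_bs] /andP[]; rewrite in_cons negb_or => /andP[neq_ab _] uniq_bs.
by move: le_ab (IH path_bs uniq_bs) => /=; rewrite (negbTE neq_ab) => /= -> ->.
Qed.

Lemma filter_lex_enum (s : seq (n.-tuple B)) :
  sorted lex s -> [seq b <- lex_enum lt n | b \in s] = s.
Proof.
move=> sorted_s; apply: (irr_sorted_eq lex_lt_trans lex_lt_irr) => //.
  exact/sorted_filter/lex_enum_sorted/lex_lt_trans.
by move=> b; rewrite mem_filter mem_sort mem_enum in_setT andbT.
Qed.

End LexOrder.

Section Maplex.

Variables (Sigma Gamma : Type) (B : finType) (lt : rel B).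
Variables (f : transduction (Sigma * B) Gamma) (u : seq Sigma).

Lemma maplex_sparse (s : seq ((size u).-tuple B)) (h : (size u).-tuple B -> seq Gamma) :
    strict_linear_order lt -> sorted (@lex_lt _ lt _) s ->
    (forall b : (size u).-tuple B, f (tensor u b) = Some (h b)) -> (forall b, b \notin s -> h b = [::]) ->
  maplex lt f u = Some (flatten (map h s)).
Proof.
move=> lt_slo sorted_s f_h h_out.
rewrite /maplex -(filter_lex_enum lt_slo sorted_s).
elim: (lex_enum lt _) => //= b e ->; rewrite f_h /=.
by case: ifP => //= /negbT/h_out->.
Qed.

Lemma maplex_undefined (b0 : B) :
  (forall b : (size u).-tuple B, f (tensor u b) = None) -> maplex lt f u = None.
Proof.
move=> f_none; have : nseq_tuple (size u) b0 \in lex_enum lt (size u).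
  by rewrite mem_sort mem_enum in_setT.
by rewrite /maplex; case: (lex_enum lt _) => //= b e _; rewrite f_none.
Qed.

End Maplex.

Definition ord_lt (m : nat) : rel 'I_m := fun x y => x < y.

Lemma ord_lt_slo m : strict_linear_order (@ord_lt m).
Proof.
split=> [x|y x z|x y]; rewrite /ord_lt ?ltnn //; first exact: ltn_trans.
by rewrite -val_eqE; case: ltngtP.
Qed.

Lemma enum_ord_sorted m : sorted (@ord_lt m) (enum 'I_m).
Proof. by have := iota_ltn_sorted 0 m; rewrite -val_enum_ord sorted_map. Qed.

Section Pointers.

Variables K n : nat.

Definition pointer_seq (i j : nat) : seq 'I_K.+2 :=
  nseq i ord_max ++ inord j.+1 :: nseq (n - i.+1) ord0.

Lemma size_pointer_seq (i : 'I_n) j : size (pointer_seq i j) == n.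
Proof. by rewrite size_cat /= !size_nseq subnSK // subnKC // ltnW. Qed.

Definition pointer (i : 'I_n) (j : 'I_K) : n.-tuple 'I_K.+2 := Tuple (size_pointer_seq i j).

Lemma tnth_pointer i j k : tnth (pointer i j) k =
  if k < i then ord_max else if k == i :> nat then inord j.+1 else ord0.
Proof.
rewrite (tnth_nth ord0) /= nth_cat size_nseq nth_nseq.
case: ltngtP => [//|lt_ik|->]; last by rewrite subnn.
by rewrite -(subnSK lt_ik) /= nth_nseq if_same.
Qed.

Lemma tnth_pointer_above (i k : 'I_n) j : i < k -> tnth (pointer i j) k = ord0.
Proof. by move=> lt_ik; rewrite tnth_pointer ltnNge ltnW // gtn_eqF. Qed.

Lemma tnth_pointer_at (i : 'I_n) (j : 'I_K) : tnth (pointer i j) i = j.+1 :> nat.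
Proof. by rewrite tnth_pointer ltnn eqxx inordK // ltnS leqW. Qed.

Lemma lex_pointer (i i' : 'I_n) (j j' : 'I_K) : (i < i') || (i == i') && (j < j') ->
  lex_lt (@ord_lt K.+2) (pointer i j) (pointer i' j').
Proof.
case/orP=> [lt_ii'|/andP[/eqP<- lt_jj']]; apply/existsP.
- exists i'; rewrite /ord_lt tnth_pointer_at tnth_pointer_above //=.
  apply/forallP => k; apply/implyP => lt_i'k.
  by rewrite !tnth_pointer_above // (ltn_trans lt_ii').
- exists i; rewrite /ord_lt !tnth_pointer_at ltnS lt_jj' /=.
  by apply/forallP => k; apply/implyP => lt_ik; rewrite !tnth_pointer_above.
Qed.

Definition pointers := [seq pointer i j | i <- enum 'I_n, j <- enum 'I_K].

Lemma pointers_sorted : sorted (@lex_lt _ (@ord_lt K.+2) n) pointers.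
Proof.
rewrite sorted_pairwise; last exact/lex_lt_trans/ord_lt_slo.
apply: (@pairwise_allpairs _ _ _ _ (@ord_lt n) (@ord_lt K)).
- by move=> i i' j j' lt_ii'; rewrite lex_pointer // [_ < _]lt_ii'.
- by move=> i j j' lt_jj'; rewrite lex_pointer // ltnn eqxx.
- by rewrite -sorted_pairwise ?enum_ord_sorted //; exact: ltn_trans.
- by rewrite -sorted_pairwise ?enum_ord_sorted //; exact: ltn_trans.
Qed.

End Pointers.

Lemma dfa_accepts_foldl (Sigma S : Type) (accept : pred S) (step : S -> Sigma -> S) s w :
  dfa_accepts accept (fun s a => Some (step s a)) s w = accept (foldl step s w).
Proof. by elim: w s => //= a w IH s; rewrite IH. Qed.

Lemma simple_transduction_of_dfa (Sigma : Type) (Gamma S : finType)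
    (step : S -> Sigma -> S) (s0 : S) (accept : pred S) (emit : S -> option Gamma)
    (f : transduction Sigma Gamma) :
    (forall w, f w = if accept (foldl step s0 w)
                     then Some (seq_of_opt (emit (foldl step s0 w))) else None) ->
  simple_transduction f.
Proof.
move=> f_run; pose final w := foldl step s0 w.
exists #|{: option Gamma}|, (fun i w => accept (final w) && (emit (final w) == enum_val i)).
exists (fun i => seq_of_opt (enum_val i)); split.
- move=> i; exists S, s0, (fun s => accept s && (emit s == enum_val i)).
  by exists (fun s a => Some (step s a)) => w; rewrite dfa_accepts_foldl.
- by move=> i; case: enum_val.
- move=> i j w neq_ij /andP[_ /eqP emit_i] /andP[_ /eqP emit_j].
  by move: neq_ij; rewrite -(enum_val_inj (etrans (esym emit_i) emit_j)) eqxx.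
- by move=> i w /andP[acc /eqP emit_i]; rewrite f_run -/(final w) acc emit_i.
- move=> w none; rewrite f_run -/(final w); case: ifP => // acc.
  by have := none (enum_rank (emit (final w))); rewrite acc enum_rankK eqxx.
Qed.

Section OptionRun.

Variables (Sigma Gamma Q : Type) (delta : Q -> Sigma -> option Q).
Variable mu : Q -> Sigma -> seq Gamma.

Definition ostep (oq : option Q) (a : Sigma) : option Q := obind (delta^~ a) oq.

Definition omu (oq : option Q) (a : Sigma) : seq Gamma := oapp (mu^~ a) [::] oq.

Definition out_at (oq : option Q) (u : seq Sigma) (i : nat) : seq Gamma :=
  if drop i u is a :: _ then omu (foldl ostep oq (take i u)) a else [::].

Lemma foldl_ostep_None u : foldl ostep None u = None.
Proof. by elim: u. Qed.

Lemma seq_run_foldl (F : pred Q) q u : seq_run F delta mu q u =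
  if oapp F false (foldl ostep (Some q) u)
  then Some (flatten [seq out_at (Some q) u i | i <- iota 0 (size u)]) else None.
Proof.
elim: u q => [|a u IH] q //=; rewrite /ostep /=.
case E: (delta q a) => [q'|]; last by rewrite foldl_ostep_None.
rewrite IH; case: ifP => //= _; rewrite (iotaDl 1 0) -map_comp.
by congr (Some (_ ++ flatten _)); apply: eq_map => i; rewrite /out_at /= /ostep /= E.
Qed.

Lemma size_out_at (K : nat) oq u i :
  (forall q a, size (mu q a) <= K) -> size (out_at oq u i) <= K.
Proof.
by move=> mu_le_K; rewrite /out_at; case: drop => // a _; case: foldl => /=.
Qed.

End OptionRun.

Section PointerAutomaton.

Variables (Sigma Gamma Q : Type) (delta : Q -> Sigma -> option Q).
Variables (mu : Q -> Sigma -> seq Gamma) (K : nat).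

Local Notation ostep := (ostep delta).
Local Notation omu := (omu mu).

(* The phase is None while reading the prefix of K+1's, Some (Some c) once a
   pointer selected the letter c (the rest must be 0's), and Some None when
   nothing is emitted. *)
Definition phase_step (oq : option Q) (a : Sigma) (p : option (option Gamma))
    (b : 'I_K.+2) : option (option Gamma) :=
  match p with
  | None => if b == ord_max then None else if b == ord0 then Some None
            else Some (onth (omu oq a) b.-1)
  | Some c => if b == ord0 then Some c else Some None
  end.

Definition pointer_step (s : option Q * option (option Gamma)) (x : Sigma * 'I_K.+2) :=
  (ostep s.1 x.1, phase_step s.1 x.1 s.2 x.2).

Lemma pointer_run_state s w :
  (foldl pointer_step s w).1 = foldl ostep s.1 (unzip1 w).
Proof. by elim: w s => //= x w IH s; rewrite IH. Qed.

Lemma pointer_run_max oq v :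
  foldl pointer_step (oq, None) (zip v (nseq (size v) ord_max)) = (foldl ostep oq v, None).
Proof. by elim: v oq => //= a v IH oq; rewrite /pointer_step /= eqxx IH. Qed.

Lemma pointer_run_tail oq c u b : size b = size u ->
  (foldl pointer_step (oq, Some c) (zip u b)).2 =
  if b == nseq (size u) ord0 then Some c else Some None.
Proof.
elim: u b oq c => [|a u IH] [|b0 b] oq c //= [size_b].
rewrite eqseq_cons [pointer_step _ _]/pointer_step /=.
by case: eqP => _; rewrite IH // if_same.
Qed.

Lemma pointer_run_pointer oq u i j : i < size u -> j < K ->
  (foldl pointer_step (oq, None) (zip u (pointer_seq K (size u) i j))).2 =
  Some (onth (out_at delta mu oq u i) j).
Proof.
move=> lt_iu lt_jK; rewrite /out_at.
case E: (drop i u) => [|a r].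
  by have := size_drop i u; rewrite E => /esym/eqP; rewrite subn_eq0 leqNgt lt_iu.
have def_u : u = take i u ++ a :: r by rewrite -E cat_take_drop.
have size_take : size (take i u) = i by rewrite size_takel // ltnW.
have size_r : size u - i.+1 = size r by rewrite subnS -size_drop E.
rewrite {1}def_u /pointer_seq size_r zip_cat ?size_nseq // foldl_cat -{2}size_take.
rewrite pointer_run_max /=; set q1 := foldl ostep oq (take i u).
have -> : pointer_step (q1, None) (a, inord j.+1) = (ostep q1 a, Some (onth (omu q1 a) j)).
  have val_b : (inord j.+1 : 'I_K.+2) = j.+1 :> nat by rewrite inordK // ltnS ltnW.
  by rewrite /pointer_step /= -!val_eqE /= val_b eqSS ltn_eqF.
by rewrite pointer_run_tail ?size_nseq // eqxx.
Qed.

Lemma pointer_run_emits oq u b c : size b = size u ->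
  (foldl pointer_step (oq, None) (zip u b)).2 = Some (Some c) ->
  exists i j, [/\ i < size u, j < K & b = pointer_seq K (size u) i j].
Proof.
elim: u b oq => [|a u IH] [|b0 b] oq //= [size_b].
rewrite [pointer_step _ _]/pointer_step /=; case: eqP => [->|neq_max].
  case/IH => // i [j [lt_iu lt_jK ->]].
  by exists i.+1, j; rewrite /pointer_seq subSS.
case: eqP => [_|neq_0]; first by rewrite pointer_run_tail // if_same.
rewrite pointer_run_tail //; case: eqP => // -> _.
have pos_b0 : 0 < b0 by rewrite lt0n; apply/eqP => b0_0; apply/neq_0/val_inj.
have lt_b0K : b0.-1 < K.
  rewrite -ltnS prednK //; have := ltn_ord b0; rewrite ltnS leq_eqVlt.
  by case/predU1P => // b0_max; case: neq_max; apply: val_inj.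
by exists 0, b0.-1; split => //; rewrite /pointer_seq subn1 /= prednK // inord_val.
Qed.

Lemma pointer_run_emits_mem oq u (b : (size u).-tuple 'I_K.+2) c :
  (foldl pointer_step (oq, None) (zip u b)).2 = Some (Some c) -> b \in pointers K (size u).
Proof.
move/pointer_run_emits => /(_ (size_tuple b)) [i [j [lt_iu lt_jK val_b]]].
have -> : b = pointer (Ordinal lt_iu) (Ordinal lt_jK) by apply: val_inj.
by apply: allpairs_f; rewrite mem_enum.
Qed.

Hypothesis mu_le_K : forall q a, size (mu q a) <= K.

Lemma flatten_pointer_outputs oq u :
  flatten [seq seq_of_opt (obind id (foldl pointer_step (oq, None) (zip u b)).2)
          | b : (size u).-tuple 'I_K.+2 <- pointers K (size u)] =
  flatten [seq out_at delta mu oq u i | i <- iota 0 (size u)].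
Proof.
rewrite map_allpairs flatten_allpairs -val_enum_ord -map_comp.
congr flatten; apply: eq_map => i /=.
rewrite -[RHS](@flatten_onth _ _ K) ?size_out_at // -val_enum_ord -map_comp.
by congr flatten; apply: eq_map => j /=; rewrite pointer_run_pointer.
Qed.

End PointerAutomaton.

Theorem mainTheorem7 (Sigma Gamma : finType) (g : transduction Sigma Gamma) :
  sequential g -> Lex1 g.
Proof.
move=> [Q [q0 [F [delta [mu g_run]]]]].
pose K := \max_(p : Q * Sigma) size (mu p.1 p.2).
have mu_le_K q a : size (mu q a) <= K.
  exact: (@leq_bigmax _ (fun p : Q * Sigma => size (mu p.1 p.2)) (q, a)).
pose run w := foldl (@pointer_step _ _ _ delta mu K) (Some q0, None) w.
pose f w := if oapp F false (run w).1 then Some (seq_of_opt (obind id (run w).2)) else None.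
exists 'I_K.+2, (@ord_lt K.+2), f; split; first exact: ord_lt_slo.
  exact: (@simple_transduction_of_dfa _ _ _ _ _ (fun s => oapp F false s.1) (fun s => obind id s.2)).
move=> u; rewrite g_run seq_run_foldl.
have run_state (b : (size u).-tuple 'I_K.+2) :
    (run (tensor u b)).1 = foldl (ostep delta) (Some q0) u.
  by rewrite /run pointer_run_state unzip1_zip // size_tuple.
case: ifP => accepted; last first.
  by apply/esym/(maplex_undefined _ ord0) => b; rewrite /f run_state accepted.
rewrite -(flatten_pointer_outputs delta mu_le_K).
apply/esym/(maplex_sparse (ord_lt_slo _) (pointers_sorted _ _)) => b.
  by rewrite /f run_state accepted.
apply: contraNeq; rewrite /tensor; case E: (foldl _ _ _).2 => [[c|]|] //= _.
exact: pointer_run_emits_mem E.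
Qed.
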